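(* Let $T$ be a $C_{p^rq^s}$-transfer system. Then the connected component of $(r,s)$ in $T$ is a rectangle, i.e., equals $\{(i,j): a\le i\le r,\ b\le j\le s\}$ for some vertex $(a,b)$.
   Context: $p,q$ are distinct primes and $r,s\ge 0$ integers. The subgroups of $C_{p^rq^s}$ are identified with grid points $(i,j)$, $0\le i\le r$, $0\le j\le s$, where $(i,j)$ stands for $C_{p^iq^j}$. A $C_{p^rq^s}$-transfer system is a partial order $\to$ on these vertices such that: $(i_1,j_1)\to(i_2,j_2)$ implies $i_1\le i_2$, $j_1\le j_2$; it is reflexive and transitive; and $(i_1,j_1)\to(i_2,j_2)$ implies $(\min\{i_1,a\},\min\{j_1,b\})\to(\min\{i_2,a\},\min\{j_2,b\})$ for every vertex $(a,b)$. Connected components are those of the underlying undirected graph. *)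

From mathcomp Require Import all_boot all_order.
Set Implicit Arguments. Unset Strict Implicit. Unset Printing Implicit Defensive.

(* Vertices (i,j), 0<=i<=r, 0<=j<=s, standing for the subgroup C_{p^i q^j}. *)
Definition vertex (r s : nat) := ('I_r.+1 * 'I_s.+1)%type.

Definition vmin (r s : nat) (x y : vertex r s) : vertex r s :=
  (if x.1 <= y.1 then x.1 else y.1, if x.2 <= y.2 then x.2 else y.2).

(* A C_{p^r q^s}-transfer system: a partial order -> on the vertices,
   refining the componentwise order, closed under restriction (min). *)
Definition transfer_system (r s : nat) (T : rel (vertex r s)) : Prop :=
  [/\ (forall x y, T x y -> (x.1 <= y.1)%N /\ (x.2 <= y.2)%N),
      reflexive T, transitive T, antisymmetric T &
      (forall x y c, T x y -> T (vmin x c) (vmin y c))].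

Definition top_vertex (r s : nat) : vertex r s := (ord_max, ord_max).

Definition undirected (r s : nat) (T : rel (vertex r s)) : rel (vertex r s) :=
  fun x y => T x y || T y x.

Definition component (r s : nat) (T : rel (vertex r s)) (v : vertex r s)
  : {set vertex r s} := [set w | connect (undirected T) v w].

Definition rectangle (r s : nat) (a : vertex r s) : {set vertex r s} :=
  [set w : vertex r s | (a.1 <= w.1)%N && (a.2 <= w.2)%N].

(* The vertices below the top vertex t (those d with d -> t) are closed under
   componentwise min, so they have a least element a.  Walking along a path
   from t, restriction lets one keep a common lower bound of t and the
   current vertex; hence every vertex of the component of t lies above a.
   Conversely, restricting a -> t to any w >= a yields a -> w. *)

From mathcomp Require Import all_boot all_order.
From mathcomp Require Import zify.

Set Implicit Arguments.
Unset Strict Implicit.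
Unset Printing Implicit Defensive.

Definition vle (r s : nat) (x y : vertex r s) : bool :=
  (x.1 <= y.1)%N && (x.2 <= y.2)%N.

Section Vertices.
Variables r s : nat.
Implicit Types a w x y z : vertex r s.

Lemma vle_trans : transitive (@vle r s).
Proof. by move=> y x z /andP[? ?] /andP[? ?]; apply/andP; split; lia. Qed.

Lemma vle_top x : vle x (top_vertex r s).
Proof. by apply/andP; split; rewrite /= -ltnS ltn_ord. Qed.

Lemma rectangleE a : rectangle a = [set w | vle a w].
Proof. by []. Qed.

Lemma vminC x y : vmin x y = vmin y x.
Proof.
case: x y => [x1 x2] [y1 y2]; rewrite /vmin /=.
by congr pair; case: ifP => ?; case: ifP => ? //; apply/val_inj => /=; lia.
Qed.

Lemma vmin_idr x y : vle y x -> vmin x y = y.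
Proof.
case: x y => [x1 x2] [y1 y2] /andP[/= ? ?]; rewrite /vmin /=.
by congr pair; case: ifP => ? //; apply/val_inj => /=; lia.
Qed.

Lemma vmin_idl x y : vle x y -> vmin x y = x.
Proof. by move=> ?; rewrite vminC vmin_idr. Qed.

Lemma vle_vmin_sum x y :
  (x.1 + x.2 <= (vmin x y).1 + (vmin x y).2)%N -> vle x y.
Proof.
rewrite /vmin /= !(fun_if (@nat_of_ord _)) /vle.
by case: (leqP x.1 y.1); case: (leqP x.2 y.2) => ? ? ?; apply/andP; split; lia.
Qed.

End Vertices.

Section TransferSystem.
Variables r s : nat.
Variable T : rel (vertex r s).
Hypothesis hT : transfer_system T.

Lemma transfer_vle x y : T x y -> vle x y.
Proof. by case: hT => hle _ _ _ _ /hle[? ?]; apply/andP. Qed.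

Lemma transfer_refl : reflexive T.
Proof. by case: hT. Qed.

Lemma transfer_trans : transitive T.
Proof. by case: hT. Qed.

Lemma transfer_restrict x y c : T x y -> vle c y -> T (vmin x c) c.
Proof.
case: hT => _ _ _ _ hres /(hres _ _ c) + /vmin_idr hyc.
by rewrite hyc.
Qed.

Lemma transfer_vmin_closed d e y : T d y -> T e y -> T (vmin d e) y.
Proof.
move=> hdy hey.
exact: transfer_trans (transfer_restrict hdy (transfer_vle hey)) hey.
Qed.

Lemma transfer_between a v w : T a v -> vle a w -> vle w v -> T a w.
Proof. by move=> hav haw /(transfer_restrict hav); rewrite vmin_idl. Qed.

Lemma common_lower_bound_step v x y d :
  T d v -> T d x -> undirected T x y -> exists d', T d' v && T d' y.
Proof.
move=> hdv hdx /orP[hxy | hyx].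
  by exists d; rewrite hdv (transfer_trans hdx hxy).
exists (vmin y d); apply/andP; split.
  exact: transfer_trans (transfer_restrict hyx (transfer_vle hdx)) hdv.
by rewrite vminC; apply: transfer_restrict hdx (transfer_vle hyx).
Qed.

Lemma path_common_lower_bound v x p :
  path (undirected T) x p -> (exists d, T d v && T d x) ->
  exists d, T d v && T d (last x p).
Proof.
elim: p x => [|y p IHp] x //= /andP[hxy pth] [d /andP[hdv hdx]].
exact/(IHp _ pth)/(common_lower_bound_step hdv hdx hxy).
Qed.

Lemma component_common_lower_bound v w :
  w \in component T v -> exists d, T d v && T d w.
Proof.
rewrite inE => /connectP[p pth ->].
by apply: path_common_lower_bound pth _; exists v; rewrite transfer_refl.
Qed.

(* The vertices below v are closed under vmin, so a vertex of minimal
   coordinate sum among them is below all of them. *)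
Lemma transfer_least_below v : exists2 a, T a v & forall d, T d v -> vle a d.
Proof.
have [a hav amin] :=
  arg_minnP (fun d : vertex r s => d.1 + d.2)%N (P := T^~ v) (transfer_refl v).
exists a => // d hdv.
exact/vle_vmin_sum/amin/(transfer_vmin_closed hav hdv).
Qed.

End TransferSystem.

Theorem mainTheorem10 (p q r s : nat) (T : rel (vertex r s)) :
  prime p -> prime q -> p <> q ->
  transfer_system T ->
  exists a : vertex r s, component T (top_vertex r s) = rectangle a.
Proof.
(* The primes p, q only name the group. *)
move=> _ _ _ hT; have [a hat amin] := transfer_least_below hT (top_vertex r s).
exists a; apply/setP => w; rewrite rectangleE.
apply/idP/idP => [/(component_common_lower_bound hT)[d /andP[hdt hdw]] |].
  by rewrite inE (vle_trans (amin _ hdt) (transfer_vle hT hdw)).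
rewrite !inE => haw; apply: (connect_trans (y := a)); apply: connect1.
  by rewrite /undirected hat orbT.
by rewrite /undirected (transfer_between hT hat haw (vle_top w)).
Qed.
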